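(* Let $p$ be an odd prime, $\omega=e^{2\pi i/p}$, $m\ge1$, $Q=T_{(p^m)}$ and $K=K_Q(p)$. Every maximal $p$-torsion abelian subgroup of $K$ is either the subgroup $T_{(p)}$ or a subgroup of the form $\langle\omega\mathbbm{1},S_\xi X\rangle$ with $S_\xi\in Q$. Any two distinct maximal $p$-torsion abelian subgroups of $K$ intersect in the center $Z(K)=\langle\omega\mathbbm{1}\rangle$.
   Context: Let $\{|q\rangle:q\in\mathbb{Z}_p\}$ be the computational basis of $\mathbb{C}^p$ and $X|q\rangle=|q+1\rangle$. For $\xi:\mathbb{Z}_p\to U(1)$ let $S_\xi=\mathrm{diag}(\xi(0),\dots,\xi(p-1))$. $T=\{S_\xi:\prod_{q}\xi(q)=1\}$ and $T_{(p^k)}=\{S\in T:S^{p^k}=\mathbbm{1}\}$. $K_Q(p)$ is the subgroup of $SU(p)$ generated by all $S_\xi X^b$ with $S_\xi\in Q$, $b\in\mathbb{Z}_p$. A subgroup is $p$-torsion abelian if it is abelian and every element $M$ in it satisfies $M^p=\mathbbm{1}$; maximal refers to inclusion among such subgroups. *)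

From HB Require Import structures.
From mathcomp Require Import all_boot all_order all_algebra all_field.
Set Implicit Arguments. Unset Strict Implicit. Unset Printing Implicit Defensive.
Import Order.TTheory GRing.Theory Num.Theory.
Local Open Scope ring_scope.

(* Matrices acting on C^p, with complex entries taken in algC (all groups
   considered here consist of matrices with root-of-unity entries). *)
Definition mat (p : nat) := 'M[algC]_p.

Definition mset (p : nat) := mat p -> Prop.
Definition msub p (A B : mset p) := forall M, A M -> B M.
Definition meq p (A B : mset p) := forall M, A M <-> B M.

(* omega = e^{2 pi i / p}: p.-root (-1) is e^{i pi / p} (minimal argument) *)
Definition omega (p : nat) : algC := (p.-root (-1)) ^+ 2.

(* X |q> = |q+1 mod p> *)
Definition shiftX (p : nat) : mat p :=
  \matrix_(i, j) (((i : nat) == (j.+1 %% p)%N)%:R).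

Definition Sxi (p : nat) (xi : 'I_p -> algC) : mat p := diag_mx (\row_q xi q).

Definition Tset (p : nat) : mset p := fun S =>
  exists xi : 'I_p -> algC,
    S = Sxi xi /\ (forall q, `|xi q| = 1) /\ \prod_q xi q = 1.

Definition Tpow (p k : nat) : mset p := fun S =>
  Tset S /\ S ^+ (p ^ k) = 1%:M.

Definition is_subgroup p (H : mset p) :=
  [/\ H 1%:M,
      (forall A B, H A -> H B -> H (A *m B)) &
      (forall A, H A -> A \in unitmx /\ H (invmx A))].

Definition generated p (G : mset p) : mset p := fun M =>
  forall H, is_subgroup H -> msub G H -> H M.

Definition KQ p (Q : mset p) : mset p :=
  generated (fun M => exists S (b : 'I_p), Q S /\ M = S *m (shiftX p) ^+ b).

Definition abelian_set p (H : mset p) :=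
  forall A B, H A -> H B -> A *m B = B *m A.

Definition ptorsion p (H : mset p) := forall M, H M -> M ^+ p = 1%:M.

Definition pt_abelian_sub p (K H : mset p) :=
  [/\ is_subgroup H, msub H K, abelian_set H & ptorsion H].

Definition maximal_pt_abelian p (K H : mset p) :=
  pt_abelian_sub K H /\
  forall H', pt_abelian_sub K H' -> msub H H' -> msub H' H.

Definition center p (K : mset p) : mset p := fun M =>
  K M /\ forall N, K N -> M *m N = N *m M.

Definition scal_omega p : mset p := generated (fun M => M = (omega p)%:M).

Definition gen_omega_SX p (S : mat p) : mset p :=
  generated (fun M => M = (omega p)%:M \/ M = S *m shiftX p).

Arguments Tpow p k _ : clear implicits.
Arguments Tset p _ : clear implicits.
Arguments scal_omega p _ : clear implicits.

From HB Require Import structures.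
From mathcomp Require Import all_boot all_order all_algebra all_field.
From Stdlib Require Import Classical.
Import Order.TTheory GRing.Theory Num.Theory.
Set Implicit Arguments. Unset Strict Implicit. Unset Printing Implicit Defensive.
Local Open Scope ring_scope.

(* Elements of K are the monomial matrices S_xi X^b.  A diagonal matrix that
   commutes with a monomial matrix of nonzero shift b has constant diagonal,
   because b generates Z_p; and a constant diagonal matrix of K is a power of
   omega 1, because its determinant is 1.  Hence, for M in K outside <omega 1>
   with M^p = 1, the p-torsion part of the centralizer of M in K is an abelian
   group: T_(p) if M is diagonal, and <omega 1, g> if M has a nonzero shift, g
   being the power of M of shift 1.  A maximal p-torsion abelian subgroup
   containing M lies in, hence equals, this centralizer; this classifies the
   maximal subgroups and shows that two of them sharing an element outside
   <omega 1> coincide.  The center is <omega 1>, since a central element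
   commutes with X and with diag(omega, omega^-1, 1, ..., 1), which is not
   scalar as p > 2. *)

Lemma prime_unity_root_prim (R : nzRingType) p (z : R) :
  prime p -> z ^+ p = 1 -> z != 1 -> p.-primitive_root z.
Proof.
move=> pr_p zp z_neq1; have [k zk kp] := prim_order_exists (prime_gt0 pr_p) zp.
case/primeP: pr_p => _ /(_ k kp) /orP [/eqP k1|/eqP <- //].
by move: z_neq1; rewrite -(prim_expr_order zk) k1 expr1 eqxx.
Qed.

Lemma omega_prim_root p : prime p -> p.-primitive_root (omega p).
Proof.
move=> pr_p; have p_gt1 := prime_gt1 pr_p; rewrite /omega.
have rp : p.-root (-1 : algC) ^+ p = -1 by rewrite rootCK // ltnW.
have := @rootC_lt0 algC _ (-1) p_gt1; move: (p.-root (-1)) rp => r rp r_lt0.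
apply: prime_unity_root_prim => //; first by rewrite -exprM mulnC exprM rp sqrrN expr1n.
rewrite sqrf_eq1 negb_or; apply/andP; split; apply/eqP => er.
  by move: rp; rewrite er expr1n => e; have := @ltrN10 algC; rewrite -e ltr10.
by move: r_lt0; rewrite er ltrN10.
Qed.

Lemma Zp_prime_unit n (b : 'I_n.+2) : prime n.+2 -> b != 0 -> b \is a GRing.unit.
Proof.
move=> pr_p b0; have := unitZpE b (isT : (1 < n.+2)%N); rewrite natr_Zp => ->.
rewrite prime_coprime // gtnNdvd //.
by rewrite lt0n; apply: contra b0 => /eqP b0; apply/eqP/val_inj.
Qed.

Section MonomialMatrices.

Variables (R : fieldType) (n : nat).
Implicit Types (xi eta zeta : 'I_n.+2 -> R) (b c : 'I_n.+2).

(* [monomial_mx xi b] is S_xi X^b: it maps |j> to xi (j + b) |j + b>. *)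
Definition monomial_mx xi b : 'M[R]_n.+2 :=
  \matrix_(i, j) (xi i * (i == j + b)%:R).

Lemma monomial_mxM xi eta b c :
  monomial_mx xi b * monomial_mx eta c =
  monomial_mx (fun i => xi i * eta (i - b)) (c + b).
Proof.
apply/matrixP => i k; rewrite !mxE (bigD1 (k + c)) //= big1; last first.
  by move=> j jn; rewrite !mxE (negbTE jn) mulr0 mulr0.
rewrite !mxE eqxx mulr1 addr0 addrA.
by case: eqP => [->|_]; rewrite ?addrK ?mulr1 // !mulr0 mul0r.
Qed.

Lemma eq_monomial_mx xi eta b :
  xi =1 eta -> monomial_mx xi b = monomial_mx eta b.
Proof. by move=> e; apply/matrixP => i j; rewrite !mxE e. Qed.

Lemma monomial_mx_entry xi b j : monomial_mx xi b (j + b) j = xi (j + b).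
Proof. by rewrite mxE eqxx mulr1. Qed.

Lemma monomial_mx_phase_inj xi eta b :
  monomial_mx xi b = monomial_mx eta b -> xi =1 eta.
Proof.
by move=> e i; rewrite -(subrK b i) -!(monomial_mx_entry _ b) e.
Qed.

Lemma monomial_mx1 : 1 = monomial_mx (fun _ => 1) 0.
Proof. by apply/matrixP => i j; rewrite !mxE addr0 mul1r. Qed.

Lemma scalar_monomial_mx (x : R) : x%:M = monomial_mx (fun _ => x) 0.
Proof. by apply/matrixP => i j; rewrite !mxE addr0 mulr_natr. Qed.

Lemma diag_monomial_mxX xi k :
  monomial_mx xi 0 ^+ k = monomial_mx (fun i => xi i ^+ k) 0.
Proof.
elim: k => [|k IH].
  by rewrite expr0 monomial_mx1; apply: eq_monomial_mx => i; rewrite expr0.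
by rewrite exprS IH monomial_mxM addr0; apply: eq_monomial_mx => i; rewrite subr0 exprS.
Qed.

Lemma diag_monomial_mx_comm xi eta :
  GRing.comm (monomial_mx xi 0) (monomial_mx eta 0).
Proof.
by rewrite /GRing.comm !monomial_mxM; apply: eq_monomial_mx => i; rewrite !subr0 mulrC.
Qed.

Lemma monomial_mxV xi b : (forall i, xi i != 0) ->
  monomial_mx xi b * monomial_mx (fun i => (xi (i + b))^-1) (- b) = 1.
Proof.
move=> xi_neq0; rewrite monomial_mxM addNr monomial_mx1.
by apply: eq_monomial_mx => i; rewrite subrK mulfV.
Qed.

(* The shift [b] generates [Z_p], so the relation [zeta i = zeta (i - b)]
   propagates the value [zeta 0] everywhere. *)
Lemma diag_comm_monomial_const zeta xi b : prime n.+2 ->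
  (forall i, xi i != 0) -> b != 0 ->
  GRing.comm (monomial_mx zeta 0) (monomial_mx xi b) -> forall i, zeta i = zeta 0.
Proof.
move=> pr_p xi_neq0 b_neq0; rewrite /GRing.comm !monomial_mxM add0r addr0.
move=> /monomial_mx_phase_inj e.
have shift i : zeta (i - b) = zeta i.
  by apply: (mulfI (xi_neq0 i)); have := e i; rewrite subr0 mulrC.
have shiftn k i : zeta (i - b *+ k) = zeta i.
  by elim: k => [|k IH]; rewrite ?subr0 // mulrSr opprD addrA shift.
move=> i; rewrite -(shiftn (b^-1 * i) i) -mulr_natr natr_Zp.
by rewrite mulVKr ?subrr // Zp_prime_unit.
Qed.

End MonomialMatrices.

Section Subgroups.

Variable p : nat.
Implicit Types (G H K : mset p) (A B : mat p).

Lemma meq_sym G H : meq G H -> meq H G.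
Proof. by move=> e M; split=> /e. Qed.

Lemma meq_trans G H K : meq G H -> meq H K -> meq G K.
Proof. by move=> eGH eHK M; split=> [/eGH /eHK|/eHK /eGH]. Qed.

Lemma mulmx1_invmx A B : A *m B = 1%:M -> A \in unitmx /\ invmx A = B.
Proof.
move=> AB1; have [uA _] := mulmx1_unit AB1; split=> //.
by rewrite -(mulKmx uA B) AB1 mulmx1.
Qed.

Lemma subgroupX H A k : is_subgroup H -> H A -> H (A ^+ k).
Proof.
case=> H1 HM _ HA; elim: k => [|k IH]; first by rewrite expr0.
by rewrite exprS; apply: HM.
Qed.

Lemma sub_generated G : msub G (generated G).
Proof. by move=> M GM H _; apply. Qed.

Lemma generated_min G H : is_subgroup H -> msub G H -> msub (generated G) H.
Proof. by move=> sH sGH M; apply. Qed.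

Lemma generated_subgroup G :
  (forall A, G A -> A \in unitmx) -> is_subgroup (generated G).
Proof.
move=> uG; split.
- by move=> H [].
- by move=> A B GA GB H sH sGH; case: (sH) => _ HM _; apply: HM; [apply: GA|apply: GB].
have unit_subgroup : is_subgroup (fun M : mat p => M \in unitmx).
  split; first exact: unitmx1.
  - by move=> A B; rewrite unitmx_mul => -> ->.
  - by move=> A; rewrite unitmx_inv => ->.
move=> A GA; split; first exact: GA _ unit_subgroup uG.
by move=> H sH sGH; case: (sH) => _ _ /(_ A (GA H sH sGH)) [].
Qed.

Lemma pt_abelian_sub_meq K G H :
  meq G H -> pt_abelian_sub K H -> pt_abelian_sub K G.
Proof.
move=> e [[H1 HM HV] HK ab pt]; split.
- split; first exact/e.
  + by move=> A B /e GA /e GB; apply/e; apply: HM.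
  + by move=> A /e /HV [uA HVA]; split=> //; apply/e.
- by move=> M /e; apply: HK.
- by move=> A B /e GA /e GB; apply: ab.
- by move=> M /e; apply: pt.
Qed.

Lemma maximal_pt_abelian_eq K H (H' : mset p) :
  maximal_pt_abelian K H -> pt_abelian_sub K H' -> msub H H' -> meq H H'.
Proof. by move=> [_ max_H] ptH' sHH' M; split; [apply: sHH'|apply: max_H]. Qed.

Lemma maximal_pt_abelian_meqK K (K' : mset p) H :
  meq K K' -> maximal_pt_abelian K H -> maximal_pt_abelian K' H.
Proof.
move=> e [[sH HK ab pt] max_H]; split; first by split=> // M /HK /e.
by move=> H' [sH' HK' ab' pt'] sHH'; apply: max_H => //; split=> // M /HK' /e.
Qed.

Lemma center_meq K (K' : mset p) : meq K K' -> meq (center K) (center K').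
Proof.
by move=> e M; split=> -[/e KM cM]; split=> // N /e; apply: cM.
Qed.

End Subgroups.

Section CommutingPair.

Variables (p : nat) (c g : mat p).
Hypotheses (p_gt0 : (0 < p)%N) (cg : GRing.comm c g).
Hypotheses (cp : c ^+ p = 1) (gp : g ^+ p = 1).

Definition pow_pair : mset p := fun M => exists a j : nat, M = c ^+ a * g ^+ j.

Lemma pow_pairM a j b k :
  (c ^+ a * g ^+ j) * (c ^+ b * g ^+ k) = c ^+ (a + b) * g ^+ (j + k).
Proof.
have cgX : GRing.comm (g ^+ j) (c ^+ b) by apply/commrX/commr_sym/commrX.
by rewrite mulrA -(mulrA (c ^+ a)) cgX mulrA -exprD -mulrA -exprD.
Qed.

Lemma pow_pair_group :
  [/\ is_subgroup pow_pair, abelian_set pow_pair & ptorsion pow_pair].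
Proof.
split; first split.
- by exists 0%N, 0%N; rewrite !expr0 mulr1.
- by move=> _ _ [a [j ->]] [b [k ->]]; exists (a + b)%N, (j + k)%N; apply: pow_pairM.
- move=> _ [a [j ->]].
  have [-> ->] : c ^+ a * g ^+ j \in unitmx /\
      invmx (c ^+ a * g ^+ j) = c ^+ (a * p.-1) * g ^+ (j * p.-1).
    apply: mulmx1_invmx; rewrite mulmxE pow_pairM -!mulnS prednK //.
    by rewrite !(mulnC _ p) !(exprM _ p) cp gp !expr1n mulr1.
  by split=> //; exists (a * p.-1)%N, (j * p.-1)%N.
- by move=> _ _ [a [j ->]] [b [k ->]]; rewrite !mulmxE !pow_pairM addnC (addnC j).
- move=> _ [a [j ->]]; rewrite exprMn_comm; last by apply/commrX/commr_sym/commrX.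
  by rewrite -!exprM !(mulnC _ p) !exprM cp gp !expr1n mulr1.
Qed.

Lemma pow_pair_min H : is_subgroup H -> H c -> H g -> msub pow_pair H.
Proof.
move=> sH Hc Hg _ [a [j ->]]; case: (sH) => _ HM _.
by apply: HM; apply: subgroupX.
Qed.

End CommutingPair.

Section MonomialGroup.

Variables n m : nat.
Local Notation p := n.+2.
Local Notation omega_mx := ((omega p)%:M : mat p).
Implicit Types (xi eta zeta : 'I_p -> algC) (b : 'I_p) (M N : mat p) (H : mset p).

Definition Qphase k xi :=
  [/\ forall q, `|xi q| = 1, \prod_q xi q = 1 & forall q, xi q ^+ (p ^ k) = 1].

Lemma Qphase_neq0 k xi i : Qphase k xi -> xi i != 0.
Proof. by case=> xi1 _ _; rewrite -normr_eq0 xi1 oner_eq0. Qed.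

Lemma Qphase_one k : Qphase k (fun _ => 1).
Proof. by split=> *; rewrite ?normr1 ?prodr_const ?expr1n. Qed.

Lemma Qphase_const k (z : algC) :
  (0 < k)%N -> z ^+ p = 1 -> Qphase k (fun _ => z).
Proof.
move=> k_gt0 zp; split=> [q||q].
- by apply/eqP; rewrite -(pexpr_eq1 (ltn0Sn n.+1)) // -normrX zp normr1.
- by rewrite prodr_const card_ord.
- by rewrite -(prednK k_gt0) expnS exprM zp expr1n.
Qed.

Lemma Qphase_twist k xi eta b : Qphase k xi -> Qphase k eta ->
  Qphase k (fun i => xi i * eta (i - b)).
Proof.
case=> [xi1 xi_prod xi_exp] [eta1 eta_prod eta_exp]; split.
- by move=> q; rewrite normrM xi1 eta1 mulr1.
- rewrite big_split /= xi_prod mul1r -[RHS]eta_prod.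
  by rewrite (reindex_inj (addIr b)); apply: eq_bigr => i _; rewrite addrK.
- by move=> q; rewrite exprMn xi_exp eta_exp mulr1.
Qed.

Lemma Qphase_inv_shift k xi b : Qphase k xi ->
  Qphase k (fun i => (xi (i + b))^-1).
Proof.
case=> [xi1 xi_prod xi_exp]; split.
- by move=> q; rewrite normfV xi1 invr1.
- by rewrite prodfV -[RHS]invr1 -[in RHS]xi_prod [in RHS](reindex_inj (addIr b)).
- by move=> q; rewrite exprVn xi_exp invr1.
Qed.

Lemma Qphase_exp1P xi : (0 < m)%N ->
  Qphase 1 xi <-> Qphase m xi /\ forall q, xi q ^+ p = 1.
Proof.
move=> m_gt0; split=> [[xi1 xi_prod xi_exp]|[[xi1 xi_prod _] xi_exp]].
  split=> //; split=> // q; rewrite -(prednK m_gt0) expnS exprM.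
  by rewrite -(expn1 p) xi_exp expr1n.
by split=> // q; rewrite expn1.
Qed.

Lemma Tpow_diagP k S :
  Tpow p k S <-> exists xi, Qphase k xi /\ S = monomial_mx xi 0.
Proof.
have Sxi_monomial xi : Sxi xi = monomial_mx xi 0.
  by apply/matrixP => i j; rewrite !mxE addr0 mulr_natr.
split=> [[[xi [-> [xi1 xi_prod]]]]|[xi [[xi1 xi_prod xi_exp] ->]]].
  rewrite Sxi_monomial diag_monomial_mxX idmxE monomial_mx1 => /monomial_mx_phase_inj.
  by exists xi.
split; first by exists xi; rewrite Sxi_monomial.
by rewrite diag_monomial_mxX idmxE monomial_mx1; apply: eq_monomial_mx.
Qed.

Lemma monomial_mx_shiftX xi k :
  monomial_mx xi 0 *m shiftX p ^+ k = monomial_mx xi k%:R.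
Proof.
have shiftXE : shiftX p = monomial_mx (fun _ => 1) 1.
  apply/matrixP => i j; rewrite !mxE mul1r; congr (_%:R).
  by rewrite -[i == j + 1]val_eqE /= modnDmr addn1.
have -> : shiftX p ^+ k = monomial_mx (fun _ => 1) k%:R.
  elim: k => [|k IH]; first by rewrite expr0 monomial_mx1.
  by rewrite exprS IH shiftXE monomial_mxM mulr1 -natr1 addrC.
by rewrite mulmxE monomial_mxM addr0; apply: eq_monomial_mx => i; rewrite mulr1.
Qed.

Definition Kset : mset p := fun M => exists xi b, Qphase m xi /\ M = monomial_mx xi b.

Lemma Kset_subgroup : is_subgroup Kset.
Proof.
split.
- by exists (fun _ => 1), 0; split; [apply: Qphase_one|apply: monomial_mx1].
- move=> _ _ [xi [b [xiQ ->]]] [eta [c [etaQ ->]]].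
  exists (fun i => xi i * eta (i - b)), (c + b).
  by split; [apply: Qphase_twist|apply: monomial_mxM].
move=> _ [xi [b [xiQ ->]]].
have [-> ->] := mulmx1_invmx (monomial_mxV b (fun i => Qphase_neq0 i xiQ)).
split=> //; exists (fun i => (xi (i + b))^-1), (- b).
by split=> //; apply: Qphase_inv_shift.
Qed.

Lemma Kset_unit M : Kset M -> M \in unitmx.
Proof. by move=> KM; have [_ _ /(_ M KM) []] := Kset_subgroup. Qed.

Lemma monomial_mxX_Qphase xi b k : Qphase m xi ->
  exists zeta, Qphase m zeta /\ monomial_mx xi b ^+ k = monomial_mx zeta (b *+ k).
Proof.
move=> xiQ; elim: k => [|k [zeta [zetaQ xi_k]]].
  by exists (fun _ => 1); split; [apply: Qphase_one|rewrite expr0 mulr0n monomial_mx1].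
exists (fun i => zeta i * xi (i - b *+ k)); split; first exact: Qphase_twist.
by rewrite exprSr xi_k monomial_mxM mulrS.
Qed.

Lemma KQ_Kset : meq (KQ (Tpow p m)) Kset.
Proof.
move=> M; split.
  apply: generated_min; first exact: Kset_subgroup.
  move=> _ [S [b [/Tpow_diagP [xi [xiQ ->]] ->]]].
  by exists xi, b%:R; rewrite monomial_mx_shiftX.
move=> [xi [b [xiQ ->]]]; apply: sub_generated; exists (monomial_mx xi 0), b.
by rewrite monomial_mx_shiftX natr_Zp; split=> //; apply/Tpow_diagP; exists xi.
Qed.

Hypotheses (pr_p : prime p) (m_gt0 : (0 < m)%N).

Let omega_prim : p.-primitive_root (omega p) := omega_prim_root pr_p.

Lemma omega_mxX a : omega_mx ^+ a = monomial_mx (fun _ => omega p ^+ a) 0.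
Proof. by rewrite scalar_monomial_mx diag_monomial_mxX. Qed.

Lemma Qphase_omegaX k a : (0 < k)%N -> Qphase k (fun _ => omega p ^+ a).
Proof.
move=> k_gt0; apply: Qphase_const => //.
by rewrite exprAC (prim_expr_order omega_prim) expr1n.
Qed.

Lemma Kset_omegaX a : Kset (omega_mx ^+ a).
Proof.
by exists (fun _ => omega p ^+ a), 0; split; [apply: Qphase_omegaX|apply: omega_mxX].
Qed.

Lemma Kset_omega : Kset omega_mx.
Proof. by rewrite -[omega_mx]expr1; apply: Kset_omegaX. Qed.

Lemma omega_mx_expp : omega_mx ^+ p = 1.
Proof. by rewrite omega_mxX (prim_expr_order omega_prim) monomial_mx1. Qed.

Lemma omega_mx_comm M : GRing.comm omega_mx M.
Proof. by rewrite /GRing.comm -!mulmxE scalar_mxC. Qed.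

Lemma scal_omegaP M : scal_omega p M <-> exists a, M = omega_mx ^+ a.
Proof.
have [pow_sub _ _] :=
  pow_pair_group (ltn0Sn n.+1) (commr1 omega_mx) omega_mx_expp (expr1n _ p).
split.
  have omega_pow : msub (fun N => N = omega_mx) (pow_pair omega_mx 1).
    by move=> _ ->; exists 1%N, 0%N; rewrite expr1 expr0 mulr1.
  move=> /(generated_min pow_sub omega_pow) [a [j ->]].
  by exists a; rewrite expr1n mulr1.
have scal_sub : is_subgroup (scal_omega p).
  by apply: generated_subgroup => _ ->; apply/Kset_unit/Kset_omega.
by case=> a ->; apply: subgroupX scal_sub _; apply: sub_generated.
Qed.

(* The determinant is 1, so the constant entry is a p-th root of unity. *)
Lemma const_diag_omegaX zeta : Qphase m zeta -> (forall i, zeta i = zeta 0) ->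
  exists a, monomial_mx zeta 0 = omega_mx ^+ a.
Proof.
move=> [_ zeta_prod _] zeta_const.
have : zeta 0 ^+ p = 1.
  by rewrite -zeta_prod (eq_bigr (fun _ => zeta 0)) ?prodr_const ?card_ord.
move=> /(prim_rootP omega_prim) [a zeta0]; exists a.
by rewrite omega_mxX; apply: eq_monomial_mx => i; rewrite zeta_const zeta0.
Qed.

Lemma Tpow1_pt_abelian : pt_abelian_sub Kset (Tpow p 1).
Proof.
split.
- split.
  + apply/Tpow_diagP; exists (fun _ => 1).
    by split; [apply: Qphase_one|apply: monomial_mx1].
  + move=> _ _ /Tpow_diagP [xi [xiQ ->]] /Tpow_diagP [eta [etaQ ->]]; apply/Tpow_diagP.
    exists (fun i => xi i * eta (i - 0)); split; first exact: Qphase_twist.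
    by rewrite mulmxE monomial_mxM addr0.
  + move=> _ /Tpow_diagP [xi [xiQ ->]].
    have [-> ->] := mulmx1_invmx (monomial_mxV 0 (fun i => Qphase_neq0 i xiQ)).
    split=> //; apply/Tpow_diagP; exists (fun i => (xi (i + 0))^-1).
    by rewrite oppr0; split=> //; apply: Qphase_inv_shift.
- by move=> _ /Tpow_diagP [xi [/(Qphase_exp1P _ m_gt0) [xiQ _] ->]]; exists xi, 0.
- move=> _ _ /Tpow_diagP [xi [_ ->]] /Tpow_diagP [eta [_ ->]].
  exact: diag_monomial_mx_comm.
- by move=> M [_]; rewrite expn1.
Qed.

Definition omega_shift_group xi := gen_omega_SX (monomial_mx xi 0).

Section ShiftGroup.

Variable xi : 'I_p -> algC.
Hypotheses (xiQ : Qphase m xi) (xi1p : monomial_mx xi 1 ^+ p = 1).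
Local Notation g := (monomial_mx xi 1).

Lemma omega_shift_group_pow_pair :
  meq (omega_shift_group xi) (pow_pair omega_mx g).
Proof.
have [pow_sub _ _] :=
  pow_pair_group (ltn0Sn n.+1) (omega_mx_comm g) omega_mx_expp xi1p.
have gen_g : monomial_mx xi 0 *m shiftX p = g.
  by rewrite -[shiftX p]expr1 monomial_mx_shiftX.
move=> M; split; first apply: generated_min => // _ [->|->].
- by exists 1%N, 0%N; rewrite expr1 expr0 mulr1.
- by exists 0%N, 1%N; rewrite gen_g expr1 expr0 mul1r.
apply: pow_pair_min; last by apply: sub_generated; right.
  apply: generated_subgroup => _ [->|->]; first exact/Kset_unit/Kset_omega.
  by rewrite gen_g; apply: Kset_unit; exists xi, 1.
by apply: sub_generated; left.
Qed.

Lemma omega_shift_group_pt_abelian : pt_abelian_sub Kset (omega_shift_group xi).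
Proof.
apply: pt_abelian_sub_meq omega_shift_group_pow_pair _.
have [pow_sub pow_ab pow_pt] :=
  pow_pair_group (ltn0Sn n.+1) (omega_mx_comm g) omega_mx_expp xi1p.
split=> //; apply: pow_pair_min; [exact: Kset_subgroup|exact: Kset_omega|].
by exists xi, 1.
Qed.

Lemma centralizer_shift_sub N : Kset N -> GRing.comm N g -> omega_shift_group xi N.
Proof.
move=> [eta [d [etaQ ->]]] comm_g.
(* [N g^(p-d)] is diagonal and commutes with [g], hence a power of [omega 1]. *)
have [zeta [zetaQ g_pd]] := monomial_mxX_Qphase 1 (p - d)%N xiQ.
set D := monomial_mx eta d * g ^+ (p - d).
have D_diag : D = monomial_mx (fun i => eta i * zeta (i - d)) 0.
  rewrite /D g_pd monomial_mxM; congr monomial_mx.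
  have p0 : (p%:R : 'I_p) = 0 := pchar_Zp (isT : (1 < p)%N).
  by rewrite -[d in _ + d]natr_Zp -natrD subnK ?p0 // ltnW.
have D_comm : GRing.comm D g.
  by apply/commr_sym/commrM; [apply/commr_sym|apply/commrX/commr_refl].
have [a Da] : exists a, D = omega_mx ^+ a.
  rewrite D_diag; apply: const_diag_omegaX; first exact: Qphase_twist.
  apply: (diag_comm_monomial_const pr_p (fun i => Qphase_neq0 i xiQ)).
    exact: Zp_nontrivial.
  by rewrite -D_diag.
have -> : monomial_mx eta d = omega_mx ^+ a * g ^+ d.
  by rewrite -Da /D -mulrA -exprD subnK ?xi1p ?mulr1 // ltnW.
by apply/omega_shift_group_pow_pair; exists a, d.
Qed.

End ShiftGroup.

Definition pt_centralizer M : mset p :=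
  fun N => [/\ Kset N, N ^+ p = 1%:M & GRing.comm M N].

Lemma pt_centralizer_diag zeta : Qphase m zeta -> ~ (forall i, zeta i = zeta 0) ->
  meq (pt_centralizer (monomial_mx zeta 0)) (Tpow p 1).
Proof.
move=> zetaQ zeta_nonconst N; split=> [[[eta [b [etaQ ->]]] N_p comm_N]|T1N].
  case: (eqVneq b 0) => [b0|b_neq0]; last first.
    case: zeta_nonconst.
    exact: (diag_comm_monomial_const pr_p (fun i => Qphase_neq0 i etaQ) b_neq0).
  move: N_p; rewrite b0 diag_monomial_mxX idmxE monomial_mx1.
  move=> /monomial_mx_phase_inj eta_p.
  by apply/Tpow_diagP; exists eta; split=> //; apply/Qphase_exp1P.
have [_ T1K _ T1pt] := Tpow1_pt_abelian.
split; [exact: T1K|exact: T1pt|].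
by move: T1N => /Tpow_diagP [eta [_ ->]]; apply: diag_monomial_mx_comm.
Qed.

Lemma pt_centralizer_shift xi0 b0 :
  Qphase m xi0 -> b0 != 0 -> monomial_mx xi0 b0 ^+ p = 1%:M ->
  exists xi, [/\ Qphase m xi, monomial_mx xi 1 ^+ p = 1 &
    meq (pt_centralizer (monomial_mx xi0 b0)) (omega_shift_group xi)].
Proof.
move=> xi0Q b0_neq0 M_p; set M := monomial_mx xi0 b0.
have [xi [xiQ Mk]] := monomial_mxX_Qphase b0 (b0^-1) xi0Q.
rewrite -mulr_natr natr_Zp mulrV ?Zp_prime_unit // in Mk.
have g_p : monomial_mx xi 1 ^+ p = 1 by rewrite -Mk exprAC M_p expr1n.
have [_ GK G_ab G_pt] := omega_shift_group_pt_abelian xiQ g_p.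
have cent_sub N : Kset N -> GRing.comm M N -> omega_shift_group xi N.
  move=> KN cMN; apply: centralizer_shift_sub => //.
  by rewrite -Mk; apply/commrX/commr_sym.
have GM : omega_shift_group xi M by apply: cent_sub; [exists xi0, b0|apply: commr_refl].
exists xi; split=> // N; split=> [[KN _ cMN]|GN]; first exact: cent_sub.
by split; [apply: GK|apply: G_pt|apply: G_ab].
Qed.

Lemma pt_centralizer_cases M : Kset M -> M ^+ p = 1%:M -> ~ scal_omega p M ->
  pt_abelian_sub Kset (pt_centralizer M) /\
  (meq (pt_centralizer M) (Tpow p 1) \/
   exists xi, Qphase m xi /\ meq (pt_centralizer M) (omega_shift_group xi)).
Proof.
move=> [xi0 [b0 [xi0Q ->]]] M_p M_nonscal.
case: (eqVneq b0 0) => [b0_eq0|b0_neq0].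
  have nonconst : ~ (forall i, xi0 i = xi0 0).
    move=> /(const_diag_omegaX xi0Q) [a Ma]; apply: M_nonscal.
    by apply/scal_omegaP; exists a; rewrite b0_eq0.
  rewrite b0_eq0; have e := pt_centralizer_diag xi0Q nonconst.
  by split; [apply: pt_abelian_sub_meq e Tpow1_pt_abelian|left].
have [xi [xiQ g_p e]] := pt_centralizer_shift xi0Q b0_neq0 M_p.
split; first exact: pt_abelian_sub_meq e (omega_shift_group_pt_abelian xiQ g_p).
by right; exists xi.
Qed.

Lemma maximal_pt_centralizer H M : maximal_pt_abelian Kset H -> H M ->
  ~ scal_omega p M -> meq H (pt_centralizer M).
Proof.
move=> maxH HM M_nonscal; have [[_ HK H_ab H_pt] _] := maxH.
have [cent_pt _] := pt_centralizer_cases (HK M HM) (H_pt M HM) M_nonscal.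
apply: maximal_pt_abelian_eq maxH cent_pt _ => N HN.
by split; [apply: HK|apply: H_pt|apply: H_ab].
Qed.

Lemma maximal_pt_abelian_cases H : maximal_pt_abelian Kset H ->
  meq H (Tpow p 1) \/ exists xi, Qphase m xi /\ meq H (omega_shift_group xi).
Proof.
move=> maxH; have [[_ HK _ H_pt] _] := maxH.
case: (classic (exists2 M, H M & ~ scal_omega p M)) => [[M HM M_nonscal]|all_scal].
  have eH := maximal_pt_centralizer maxH HM M_nonscal.
  have [_ [e|[xi [xiQ e]]]] := pt_centralizer_cases (HK M HM) (H_pt M HM) M_nonscal.
    by left; apply: meq_trans eH e.
  by right; exists xi; split=> //; apply: meq_trans eH e.
left; apply: maximal_pt_abelian_eq maxH Tpow1_pt_abelian _ => M HM.
have /scal_omegaP [a ->] : scal_omega p M.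
  by apply: NNPP => M_nonscal; apply: all_scal; exists M.
apply/Tpow_diagP; exists (fun _ => omega p ^+ a).
by split; [apply: Qphase_omegaX|apply: omega_mxX].
Qed.

Lemma maximal_pt_abelian_omega H : maximal_pt_abelian Kset H -> H omega_mx.
Proof.
case/maximal_pt_abelian_cases => [e|[xi [_ e]]]; apply/e.
  apply/Tpow_diagP; exists (fun _ => omega p ^+ 1); split; first exact: Qphase_omegaX.
  by rewrite -omega_mxX expr1.
by apply: sub_generated; left.
Qed.

Lemma maximal_pt_abelian_inter H1 H2 :
  maximal_pt_abelian Kset H1 -> maximal_pt_abelian Kset H2 -> ~ meq H1 H2 ->
  meq (fun M => H1 M /\ H2 M) (scal_omega p).
Proof.
move=> max1 max2 neq12 M; split=> [[H1M H2M]|scalM].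
  apply: NNPP => M_nonscal; apply: neq12.
  apply: meq_trans (maximal_pt_centralizer max1 H1M M_nonscal) _.
  exact/meq_sym/(maximal_pt_centralizer max2 H2M M_nonscal).
have scal_sub H : maximal_pt_abelian Kset H -> H M.
  move=> maxH; have [[sH _ _ _] _] := maxH.
  by apply: generated_min sH _ _ scalM => _ ->; apply: maximal_pt_abelian_omega.
by split; apply: scal_sub.
Qed.

Definition omega_dipole : 'I_p -> algC :=
  fun i => if i == 0 then omega p else if i == 1 then (omega p)^-1 else 1.

Lemma Qphase_omega_dipole : Qphase m omega_dipole.
Proof.
have [w1 _ w_exp] := Qphase_const m_gt0 (prim_expr_order omega_prim).
have w_neq0 : omega p != 0 by rewrite (prim_root_eq0 omega_prim).
split=> [q||q]; rewrite /omega_dipole.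
- by case: ifP => _; [|case: ifP => _]; rewrite ?normfV ?(w1 q) ?invr1 ?normr1.
- rewrite (bigD1 0) //= (bigD1 1) ?Zp_nontrivial //= big1 => [|i /andP [i0 i1]].
    by rewrite mulr1 mulfV.
  by rewrite (negbTE i0) (negbTE i1).
- by case: ifP => _; [|case: ifP => _]; rewrite ?exprVn ?(w_exp q) ?invr1 ?expr1n.
Qed.

Lemma omega_dipole_nonconst : odd p -> ~ (forall i, omega_dipole i = omega_dipole 0).
Proof.
move=> odd_p /(_ 1); rewrite /omega_dipole eqxx (negbTE (Zp_nontrivial _)) eqxx => e.
have : omega p ^+ 2 == 1.
  by rewrite expr2 -{1}e mulVf ?(prim_root_eq0 omega_prim).
rewrite -(prim_order_dvd omega_prim) => /(dvdn_leq (isT : (0 < 2)%N)).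
by case: n odd_p {e}.
Qed.

Lemma center_Kset : odd p -> meq (center Kset) (scal_omega p).
Proof.
move=> odd_p M; split=> [[[xi [b [xiQ ->]]] cM]|/scal_omegaP [a ->]]; last first.
  split=> [|N _]; first exact: Kset_omegaX.
  by apply/commr_sym/commrX/commr_sym/omega_mx_comm.
have Kdip : Kset (monomial_mx omega_dipole 0).
  by exists omega_dipole, 0; split=> //; apply: Qphase_omega_dipole.
have b0 : b = 0.
  case: (eqVneq b 0) => // b_neq0; case: (omega_dipole_nonconst odd_p).
  apply: (diag_comm_monomial_const pr_p (fun i => Qphase_neq0 i xiQ) b_neq0).
  exact/commr_sym/cM.
rewrite b0 in cM *.
have X_K : Kset (monomial_mx (fun _ => 1) 1).
  by exists (fun _ => 1), 1; split=> //; apply: Qphase_one.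
have xi_const :=
  diag_comm_monomial_const pr_p (fun _ => oner_neq0 _) (Zp_nontrivial _) (cM _ X_K).
by have [a ->] := const_diag_omegaX xiQ xi_const; apply/scal_omegaP; exists a.
Qed.

End MonomialGroup.

Theorem corollary1 (p m : nat) :
  prime p -> odd p -> (1 <= m)%N ->
  let Q := Tpow p m in
  let K := KQ Q in
  [/\ (forall H, maximal_pt_abelian K H ->
         meq H (Tpow p 1) \/ exists S, Q S /\ meq H (gen_omega_SX S)),
      meq (center K) (scal_omega p) &
      (forall H1 H2, maximal_pt_abelian K H1 -> maximal_pt_abelian K H2 ->
         ~ meq H1 H2 -> meq (fun M => H1 M /\ H2 M) (scal_omega p))].
Proof.
case: p => [|[|n]] // pr_p odd_p m_gt0 Q K.
have KE : meq K (Kset m) := KQ_Kset m.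
split.
- move=> H /(maximal_pt_abelian_meqK KE) /(maximal_pt_abelian_cases pr_p m_gt0).
  case=> [eH|[xi [xiQ eH]]]; first by left.
  by right; exists (monomial_mx xi 0); split=> //; apply/Tpow_diagP; exists xi.
- exact: meq_trans (center_meq KE) (center_Kset pr_p m_gt0 odd_p).
- move=> H1 H2 /(maximal_pt_abelian_meqK KE) max1 /(maximal_pt_abelian_meqK KE) max2.
  exact: (maximal_pt_abelian_inter pr_p m_gt0 max1 max2).
Qed.
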